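(* Let $G$ be the Delaunay graph of a unit intensity Poisson process on $\mathbb{R}^2$, with edges drawn as straight segments between their endpoints, and let $\rho,\ell>0$. The probability that $G$ has an edge of length at least $\ell$ which intersects the square $Q(0,\rho)$ is at most $\left(\frac{\sqrt{32}\,\rho}{\ell}+8\right)^2 e^{-\ell^2/32}$.
   Context: $Q(x,R)=x+[-R,R]^2$. The Voronoi cell of $x\in V$ is $C(x)=\{z: d(z,x)=d(z,V)\}$; the Delaunay graph has vertex set $V$ and an edge $(x,y)$ iff $|C(x)\cap C(y)|>1$. *)

From HB Require Import structures.
From mathcomp Require Import all_boot all_order all_algebra.
From mathcomp Require Import finmap.
From mathcomp Require Import all_classical all_reals all_analysis.
Import Order.TTheory GRing.Theory Num.Theory.

Set Implicit Arguments.
Unset Strict Implicit.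
Unset Printing Implicit Defensive.

Local Open Scope classical_set_scope.
Local Open Scope ring_scope.

Section Defs.
Variable R : realType.

Definition area : set (R * R) -> \bar R :=
  ((@lebesgue_measure R) \x (@lebesgue_measure R))%E.

Definition square (x : R * R) (r : R) : set (R * R) :=
  [set z | `|z.1 - x.1| <= r /\ `|z.2 - x.2| <= r].

Definition bounded2 (A : set (R * R)) : Prop :=
  exists r : R, A `<=` square (0, 0) r.

Definition npts (S : set (R * R)) : \bar R :=
  if pselect (finite_set S) is left _ then ((#|` fset_set S|)%:R)%:E
  else +oo%E.

Definition poisson_pmf (m : R) (k : nat) : R :=
  expR (- m) * m ^+ k / (k`!)%:R.

Definition dist2 (a b : R * R) : R :=
  Num.sqrt ((a.1 - b.1) ^+ 2 + (a.2 - b.2) ^+ 2).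

Definition dist_set (z : R * R) (V : set (R * R)) : R :=
  inf [set dist2 z v | v in V].

Definition voronoi (V : set (R * R)) (x : R * R) : set (R * R) :=
  [set z | dist2 z x = dist_set z V].

Definition delaunay_edge (V : set (R * R)) (x y : R * R) : Prop :=
  V x /\ V y /\ x <> y /\
  exists z1 z2, z1 <> z2 /\
    (voronoi V x `&` voronoi V y) z1 /\ (voronoi V x `&` voronoi V y) z2.

Definition segment (x y : R * R) : set (R * R) :=
  [set (x.1 + t * (y.1 - x.1), x.2 + t * (y.2 - x.2)) | t in `[0, 1]].

End Defs.

Definition unit_poisson_process (R : realType) (d : measure_display)
  (Omega : measurableType d) (P : probability Omega R)
  (X : Omega -> set (R * R)) : Prop :=
  (forall A : set (R * R), measurable A -> bounded2 A ->
     forall k : nat, measurable [set w | npts (X w `&` A) = (k%:R)%:E]) /\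
  (forall (n : nat) (A : 'I_n -> set (R * R)) (k : 'I_n -> nat),
     (forall i, measurable (A i) /\ bounded2 (A i)) ->
     (forall i j, i != j -> A i `&` A j = set0) ->
     P (\bigcap_(i in [set: 'I_n]) [set w | npts (X w `&` A i) = ((k i)%:R)%:E])
     = (\prod_(i < n) poisson_pmf (fine (area (A i))) (k i))%:E).

Definition long_edge_event (R : realType) (Omega : Type)
  (X : Omega -> set (R * R)) (rho ell : R) : set Omega :=
  [set w | exists x y : R * R, delaunay_edge (X w) x y /\ ell <= dist2 x y /\
     (segment x y `&` square (0, 0) rho) !=set0].

(* A Delaunay edge xy comes with a point z equidistant from x and y that has no
   point of the process closer than |z - x|, so the open disk of centre z through
   x and y is empty.  If |x - y| >= l, this disk contains a disk of radius l/4
   whose centre lies within 3l/4 of any given point of the edge: move along the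
   chord to a point at distance >= l/2 from both ends, then l/4 towards z.
   A grid of squares of side l/3 placed with step l/100 is fine enough for every
   such disk meeting the region to contain a whole grid square, so the event
   forces one of N^2 squares to be empty, each with probability e^(-l^2/9).
   The resulting bound N^2 e^(-l^2/9) is below the claimed one when l^2 > 112,
   and for l^2 <= 112 the claimed bound is at least 1. *)

From Pilot Require Import Defs.
From HB Require Import structures.
From mathcomp Require Import all_boot all_order all_algebra.
From mathcomp Require Import all_classical all_reals all_analysis.
From mathcomp Require Import ring lra zify.
Import Order.TTheory GRing.Theory Num.Theory.

Set Implicit Arguments.
Unset Strict Implicit.
Unset Printing Implicit Defensive.
Local Open Scope classical_set_scope.
Local Open Scope ring_scope.

Definition dot (R : realType) (u v : R * R) : R := u.1 * v.1 + u.2 * v.2.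

Definition perp (R : realType) (u : R * R) : R * R := (- u.2, u.1).

Local Ltac coords := rewrite /dot /perp /= /GRing.scale /=.

Section PlaneGeometry.
Variable R : realType.
Implicit Types (a b d h n p u v w x y z : R * R) (r M s tau ell : R).

Lemma dot_ge0 u : 0 <= dot u u.
Proof. by rewrite /dot addr_ge0 // -expr2 sqr_ge0. Qed.

Lemma dot_scale k u : dot (k *: u) (k *: u) = k ^+ 2 * dot u u.
Proof. by coords; ring. Qed.

Lemma dist2_sqr a b : dist2 a b ^+ 2 = dot (a - b) (a - b).
Proof. by rewrite /dist2 sqr_sqrtr ?addr_ge0 ?sqr_ge0 // /dot /= !expr2. Qed.

Lemma cauchy_schwarz u v : dot u v ^+ 2 <= dot u u * dot v v.
Proof. have := sqr_ge0 (u.1 * v.2 - u.2 * v.1); rewrite /dot; nra. Qed.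

Lemma dot_le_mul u v r M : 0 <= r -> 0 <= M ->
  dot u u <= r ^+ 2 -> dot v v <= M ^+ 2 -> dot u v <= r * M.
Proof.
move=> r0 M0 hu hv; have cs := cauchy_schwarz u v.
have hd : dot u v ^+ 2 <= (r * M) ^+ 2.
  by rewrite exprMn (le_trans cs) // ler_pM // dot_ge0.
have rM0 : 0 <= r * M by rewrite mulr_ge0.
case: (lerP (dot u v) 0) => [uv0|/ltW uv0]; first exact: le_trans uv0 rM0.
by rewrite -ler_sqr ?nnegrE.
Qed.

Lemma dot_add_le u v r M : 0 <= r -> 0 <= M ->
  dot u u <= r ^+ 2 -> dot v v <= M ^+ 2 -> dot (u + v) (u + v) <= (r + M) ^+ 2.
Proof.
move=> r0 M0 hu hv; have := dot_le_mul r0 M0 hu hv.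
rewrite /dot /= in hu hv *; nra.
Qed.

Lemma dot_add_lt u v r M : 0 <= r -> 0 <= M ->
  dot u u < r ^+ 2 -> dot v v <= M ^+ 2 -> dot (u + v) (u + v) < (r + M) ^+ 2.
Proof.
move=> r0 M0 hu hv; have := dot_le_mul r0 M0 (ltW hu) hv.
rewrite /dot /= in hu hv *; nra.
Qed.

Lemma dot_perp_decomposition n u v :
  dot n n * dot u v = dot u n * dot v n + dot u (perp n) * dot v (perp n).
Proof. by coords; ring. Qed.

Lemma dot_orthogonal_plane d n u v : 0 < dot d d -> dot n n = 1 ->
  dot n d = 0 -> dot u d = 0 -> dot u v = dot u n * dot v n.
Proof.
move=> d0 nn nd ud.
have un : dot u (perp n) = 0.
  have := dot_perp_decomposition d u (perp n).
  have -> : dot (perp n) (perp d) = dot n d by coords; ring.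
  rewrite ud nd mul0r mulr0 addr0 => /eqP; rewrite mulf_eq0 => /orP[|/eqP //].
  by rewrite gt_eqF.
by have := dot_perp_decomposition n u v; rewrite nn un mul1r mul0r addr0.
Qed.

Lemma exists_unit_normal d u : 0 < dot d d ->
  exists n, [/\ dot n n = 1, dot n d = 0 & 0 <= dot u n].
Proof.
move=> d0; set s := Num.sqrt (dot d d).
have s0 : 0 < s by rewrite sqrtr_gt0.
have ss : s ^+ 2 = dot d d by rewrite sqr_sqrtr // ltW.
pose n0 := s^-1 *: perp d.
have n0n0 : dot n0 n0 = 1.
  have -> : dot n0 n0 = dot d d / s ^+ 2.
    by rewrite /n0; coords; field; rewrite gt_eqF.
  by rewrite ss divff // gt_eqF.
have n0d : dot n0 d = 0 by rewrite /n0; coords; field; rewrite gt_eqF.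
case: (lerP 0 (dot u n0)) => [un0|un0]; first by exists n0.
exists (- n0); split; rewrite -?n0n0 -?n0d; coords; try ring.
by move: un0; coords; lra.
Qed.

Lemma closer_than_endpoint u h v : dot u h = 0 -> 0 <= dot u v ->
  dot v v < dot h h -> dot (u - v) (u - v) < dot (u + h) (u + h).
Proof.
move=> uh uv vh.
have -> : dot (u - v) (u - v) = dot u u - 2 * dot u v + dot v v.
  by coords; ring.
have -> : dot (u + h) (u + h) = dot u u + 2 * dot u h + dot h h.
  by coords; ring.
lra.
Qed.

Lemma disk_in_circumdisk x d z n s tau ell : 0 < ell -> ell <= s ->
  dot d d = s ^+ 2 -> ell / 2 <= tau * s -> ell / 2 <= (1 - tau) * s ->
  dot (z - x) (z - x) = dot (z - (x + d)) (z - (x + d)) ->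
  dot n n = 1 -> dot n d = 0 -> 0 <= dot (z - x) n ->
  forall w, dot (w - (x + tau *: d + (ell / 4) *: n))
                (w - (x + tau *: d + (ell / 4) *: n)) < (ell / 4) ^+ 2 ->
    dot (z - w) (z - w) < dot (z - x) (z - x).
Proof.
move=> l0 ls ss tau_lo tau_hi hz nn nd zn w.
(* Around the midpoint m of the chord, z - m = u is orthogonal to d and
   w - m = a + b: it has a nonnegative component along u and length < s / 2. *)
set a := w - _ => ha.
pose b := (tau - 2^-1) *: d + (ell / 4) *: n.
pose h := 2^-1 *: d.
pose u := z - (x + h).
have s0 : 0 < s := lt_le_trans l0 ls.
have d0 : 0 < dot d d by rewrite ss exprn_gt0.
have ud : dot u d = 0.
  have : dot (z - x) (z - x) - dot (z - (x + d)) (z - (x + d)) = 2 * dot u d.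
    by rewrite /u /h; coords; field.
  by rewrite hz subrr => /esym /eqP; rewrite mulf_eq0 pnatr_eq0 => /eqP.
have bb : dot b b <= (s / 2 - ell / 4) ^+ 2.
  have -> : dot b b = (tau - 2^-1) ^+ 2 * dot d d
      + (tau - 2^-1) * ell / 2 * dot n d + (ell / 4) ^+ 2 * dot n n.
    by rewrite /b; coords; field.
  rewrite ss nd nn; nra.
have an : - (ell / 4) < dot a n.
  have := cauchy_schwarz a n; rewrite nn mulr1 => an2.
  nra.
have uv : 0 <= dot u (a + b).
  rewrite (dot_orthogonal_plane (a + b) d0 nn nd ud) mulr_ge0 //.
    have -> : dot u n = dot (z - x) n - 2^-1 * dot n d.
      by rewrite /u /h; coords; field.
    by rewrite nd mulr0 subr0.
  have -> : dot (a + b) n = dot a n + (tau - 2^-1) * dot n d + ell / 4 * dot n n.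
    by rewrite /b; coords; field.
  rewrite nd nn; lra.
have vh : dot (a + b) (a + b) < dot h h.
  have -> : dot h h = (ell / 4 + (s / 2 - ell / 4)) ^+ 2.
    have -> : dot h h = dot d d / 4 by rewrite /h; coords; field.
    by rewrite ss; field.
  by apply: dot_add_lt => //; lra.
have uh : dot u h = 0 by move: ud; rewrite /h; coords => ud; nra.
have := closer_than_endpoint uh uv vh.
have -> : dot (u - (a + b)) (u - (a + b)) = dot (z - w) (z - w).
  by rewrite /u /h /a /b; coords; field.
have -> // : dot (u + h) (u + h) = dot (z - x) (z - x).
by rewrite /u /h; coords; field.
Qed.

Lemma exists_clamp (a t : R) : 0 <= a -> a <= 1 / 2 -> 0 <= t <= 1 ->
  exists tau, [/\ a <= tau, tau <= 1 - a & `|tau - t| <= a].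
Proof.
move=> a0 a_half /andP[t0 t1].
case: (ltP t a) => [t_lt|t_ge]; first by exists a; rewrite ler_norml; split; lra.
case: (ltP (1 - a) t) => [t_gt|t_le].
  by exists (1 - a); rewrite ler_norml; split; lra.
by exists t; rewrite subrr normr0; split.
Qed.

Lemma empty_disk_near_segment x y z p ell : 0 < ell ->
  ell ^+ 2 <= dot (y - x) (y - x) -> dot (z - x) (z - x) = dot (z - y) (z - y) ->
  segment x y p ->
  exists2 c, dot (c - p) (c - p) <= (3 * ell / 4) ^+ 2 &
    forall w, dot (w - c) (w - c) < (ell / 4) ^+ 2 ->
      dot (z - w) (z - w) < dot (z - x) (z - x).
Proof.
move=> l0 lxy hz [t t01 <-].
have {t01} : t \in `[0, 1] := t01; rewrite in_itv /= => t01.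
set d := y - x in lxy; set s := Num.sqrt (dot d d).
have ss : dot d d = s ^+ 2 by rewrite /s sqr_sqrtr // dot_ge0.
have ls : ell <= s.
  by move: lxy; rewrite ss ler_sqr // nnegrE ?sqrtr_ge0 // ltW.
have s0 : 0 < s := lt_le_trans l0 ls.
have d0 : 0 < dot d d by rewrite ss exprn_gt0.
pose tau0 := ell / (2 * s).
have tau0s : tau0 * s = ell / 2 by rewrite /tau0; field; rewrite gt_eqF.
have [tau0_ge0 tau0_half] : 0 <= tau0 /\ tau0 <= 1 / 2.
  by split; rewrite -(ler_pM2r s0) ?mul0r tau0s; lra.
have [tau [tau_lo tau_hi tau_t]] := exists_clamp tau0_ge0 tau0_half t01.
have [n [nn nd zn]] := exists_unit_normal (z - x) d0.
exists (x + tau *: d + (ell / 4) *: n).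
  have -> : 3 * ell / 4 = ell / 2 + ell / 4 by field.
  set c := x + _ + _; set q := (_, _).
  have -> : dot (c - q) (c - q)
      = dot ((tau - t) *: d + (ell / 4) *: n) ((tau - t) *: d + (ell / 4) *: n).
    by rewrite /c /q /d; coords; ring.
  apply: dot_add_le; rewrite ?dot_scale ?nn ?mulr1; [lra | lra | | by []].
  have h : (tau - t) ^+ 2 <= tau0 ^+ 2 by move: tau_t; rewrite ler_norml; nra.
  by rewrite ss -tau0s [X in _ <= X]exprMn ler_pM2r ?exprn_gt0.
move=> w; apply: (disk_in_circumdisk l0 ls ss) => //.
- by rewrite -tau0s ler_pM2r.
- by rewrite -tau0s ler_pM2r //; lra.
- by rewrite hz /d subrKC.
Qed.

End PlaneGeometry.

Section Delaunay.
Variable R : realType.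
Implicit Types (V : set (R * R)) (c p v x y z : R * R) (rho ell : R).

Lemma dist_set_le V z v : V v -> dist_set z V <= dist2 z v.
Proof.
move=> Vv; apply: ge_inf; last by exists v.
by exists 0 => _ [u _ <-]; rewrite sqrtr_ge0.
Qed.

Lemma dot_coord_le (u : R * R) r : 0 <= r -> dot u u <= r ^+ 2 ->
  `|u.1| <= r /\ `|u.2| <= r.
Proof.
move=> r0; rewrite /dot !ler_norml => hu.
by have := sqr_ge0 u.1; have := sqr_ge0 u.2; rewrite !expr2; split; nra.
Qed.

Lemma long_edge_empty_disk V x y rho ell : 0 < ell ->
  delaunay_edge V x y -> ell <= dist2 x y ->
  (segment x y `&` square (0, 0) rho) !=set0 ->
  exists c, [/\ `|c.1| <= rho + 3 * ell / 4, `|c.2| <= rho + 3 * ell / 4 &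
    forall v, V v -> (ell / 4) ^+ 2 <= dot (v - c) (v - c)].
Proof.
move=> l0 [_ [_ [_ [z [_ [_ [[zx zy] _]]]]]]] lxy [p [segp [p1 p2]]].
have hz : dot (z - x) (z - x) = dot (z - y) (z - y) by rewrite -!dist2_sqr zx zy.
have lxy2 : ell ^+ 2 <= dot (y - x) (y - x).
  have -> : dot (y - x) (y - x) = dist2 x y ^+ 2 by rewrite dist2_sqr; coords; ring.
  by rewrite ler_sqr ?nnegrE ?sqrtr_ge0 // ltW.
have [c cp hc] := empty_disk_near_segment l0 lxy2 hz segp.
have ell34 : 0 <= 3 * ell / 4 by lra.
have [cp1 cp2] := dot_coord_le ell34 cp.
exists c; split.
- by move: p1 cp1; rewrite /= subr0 !ler_norml; lra.
- by move: p2 cp2; rewrite /= subr0 !ler_norml; lra.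
move=> v Vv; rewrite leNgt; apply/negP => /hc.
rewrite -!dist2_sqr ltr_sqr ?nnegrE ?sqrtr_ge0 // zx.
by apply/negP; rewrite -leNgt dist_set_le.
Qed.

End Delaunay.

Lemma npts_set0 (R : realType) : npts (set0 : set (R * R)) = 0%:E.
Proof.
rewrite /npts; case: pselect => [_|/(_ (finite_set0 _))//].
by rewrite fset_set0.
Qed.

Definition void_event (R : realType) (Omega : Type) (X : Omega -> set (R * R))
    (A : set (R * R)) : set Omega :=
  [set w | npts (X w `&` A) = (0%:R)%:E].

Section PoissonVoids.
Variables (R : realType) (d : measure_display) (Omega : measurableType d).
Variables (P : probability Omega R) (X : Omega -> set (R * R)).
Hypothesis PPP : unit_poisson_process P X.

Lemma poisson_void_prob (A : set (R * R)) : measurable A -> bounded2 A ->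
  P (void_event X A) = (expR (- fine (area A)))%:E.
Proof.
move: PPP => [_ hind] mA bA.
have := hind 1%N (fun _ => A) (fun _ => 0%N) (fun _ => conj mA bA).
rewrite big_ord1 /Defs.poisson_pmf expr0 mulr1 fact0 divr1 => <-; last first.
  by move=> i j; rewrite !ord1.
by congr (P _); apply/seteqP; split=> [w Aw i _ | w /(_ ord0 I)].
Qed.

End PoissonVoids.

Definition half_open_square (R : realType) (a b L : R) : set (R * R) :=
  [set` `[a, a + L[] `*` [set` `[b, b + L[].

Lemma area_half_open_square (R : realType) (a b L : R) : 0 < L ->
  area (half_open_square a b L) = (L ^+ 2)%:E.
Proof.
move=> L0; rewrite /area product_measure1E //.
have /= la := @lebesgue_measure_itv R `[a, a + L[.
have /= lb := @lebesgue_measure_itv R `[b, b + L[.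
rewrite [X in (X * _)%E]la [X in (_ * X)%E]lb !lte_fin !ltrDl L0 -!EFinD -EFinM.
by congr EFin; ring.
Qed.

Lemma half_open_square_measurable (R : realType) (a b L : R) :
  measurable (half_open_square a b L).
Proof. by apply: measurableX; apply: measurable_itv. Qed.

Lemma half_open_square_bounded (R : realType) (a b L : R) :
  bounded2 (half_open_square a b L).
Proof.
exists (`|a| + `|b| + `|L|) => u [/= u1 u2].
move: u1 u2; rewrite !in_itv /= /square /= !subr0 => /andP[? ?] /andP[? ?].
have := ler_norm a; have := ler_norm (- a); have := normr_ge0 a.
have := ler_norm b; have := ler_norm (- b); have := normr_ge0 b.
have := ler_norm L; have := normr_ge0 L.
rewrite !normrN !ler_norml; split; lra.
Qed.

Lemma exists_grid_index (R : realType) (a g x : R) (n : nat) : 0 < g -> a <= x ->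
  x < a + n%:R * g -> exists2 i, (i < n)%N & a + i%:R * g <= x < a + i%:R * g + g.
Proof.
move=> g0 ax xn; have v0 : 0 <= (x - a) / g by rewrite divr_ge0 ?subr_ge0 // ltW.
exists (Num.truncn ((x - a) / g)).
  by rewrite truncn_lt_nat // ltr_pdivrMr // ltrBlDl.
have vg : (x - a) / g * g = x - a by rewrite divfK // gt_eqF.
move: (truncn_itv v0) => /andP[lo hi].
rewrite -(ler_pM2r g0) vg in lo; rewrite -(ltr_pM2r g0) vg -natr1 mulrDl mul1r in hi.
by apply/andP; split; lra.
Qed.

Section Grid.
Variables (R : realType) (rho ell : R).
Hypotheses (rho_gt0 : 0 < rho) (ell_gt0 : 0 < ell).

(* A cell whose corner is off its ideal position by less than grid_step in each
   coordinate still fits in the disk of radius ell / 4, because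
   sqrt 2 * (ell / 6 + ell / 100) < ell / 4. *)
Definition grid_step := ell / 100.

Definition cell_side := ell / 3.

Lemma grid_step_gt0 : 0 < grid_step.
Proof. by rewrite divr_gt0. Qed.

Definition grid_origin := - (rho + 3 * ell / 4) - cell_side / 2 - grid_step.

Definition grid_size := (Num.truncn ((2 * rho + 3 * ell / 2) / grid_step)).+2.

Definition grid_cell (i j : nat) : set (R * R) :=
  half_open_square (grid_origin + i%:R * grid_step)
    (grid_origin + j%:R * grid_step) cell_side.

Lemma grid_index_near (x : R) : `|x| <= rho + 3 * ell / 4 ->
  exists2 i, (i < grid_size)%N &
    forall u, grid_origin + i%:R * grid_step <= u
                < grid_origin + i%:R * grid_step + cell_side ->
      `|u - x| < cell_side / 2 + grid_step.
Proof.
move=> /[!ler_norml] /andP[x_lo x_hi]; have g0 := grid_step_gt0.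
have [||i iN /andP[i_lo i_hi]] :=
  @exists_grid_index R grid_origin grid_step (x - cell_side / 2) grid_size g0.
- by rewrite /grid_origin; lra.
- set W := (2 * rho + 3 * ell / 2) / grid_step.
  have := real_truncnS_gt (num_real W); rewrite ltr_pdivrMr // => W_lt.
  have -> : grid_size%:R = (Num.truncn W).+1%:R + 1 :> R by rewrite natr1.
  by rewrite /grid_origin mulrDl; lra.
exists i => // u /andP[u_lo u_hi]; rewrite ltr_norml; apply/andP; split; lra.
Qed.

Lemma grid_cell_in_disk c :
  `|c.1| <= rho + 3 * ell / 4 -> `|c.2| <= rho + 3 * ell / 4 ->
  exists2 k, (k < grid_size * grid_size)%N &
    grid_cell (k %/ grid_size) (k %% grid_size) `<=`
      [set w | dot (w - c) (w - c) < (ell / 4) ^+ 2].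
Proof.
move=> /grid_index_near [i iN near_i] /grid_index_near [j jN near_j].
exists (i * grid_size + j)%N; first by nia.
rewrite divnMDl // divn_small // addn0 modnMDl modn_small //.
move=> w [/=]; rewrite !in_itv /= => /near_i w1 /near_j w2.
have : (cell_side / 2 + grid_step) ^+ 2 = ell ^+ 2 * (53 / 300) ^+ 2.
  by rewrite /cell_side /grid_step; field.
move: w1 w2; rewrite /= /dot /= !ltr_norml => /andP[? ?] /andP[? ?].
have := sqr_ge0 ell; nra.
Qed.

Lemma grid_size_le : grid_size%:R <= 200 * rho / ell + 152.
Proof.
set W := (2 * rho + 3 * ell / 2) / grid_step.
have W0 : 0 <= W.
  by rewrite divr_ge0 ?ltW ?grid_step_gt0 //; move: rho_gt0 ell_gt0; lra.
have -> : grid_size%:R = (Num.truncn W)%:R + 2 :> R by rewrite /grid_size -addn2 natrD.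
have : (Num.truncn W)%:R <= W by rewrite truncn_le.
have -> : W = 200 * rho / ell + 150 by rewrite /W /grid_step; field; rewrite gt_eqF.
lra.
Qed.

(* A single index k < grid_size ^ 2 enumerates the cells, since content
   subadditivity is stated for sequences of sets. *)
Definition grid_void (Omega : Type) (X : Omega -> set (R * R)) (k : nat) :=
  void_event X (grid_cell (k %/ grid_size) (k %% grid_size)).

Definition void_cells (Omega : Type) (X : Omega -> set (R * R)) : set Omega :=
  \big[setU/set0]_(k < grid_size * grid_size) grid_void X k.

Lemma long_edge_event_sub_void_cells (Omega : Type) (X : Omega -> set (R * R)) :
  long_edge_event X rho ell `<=` void_cells X.
Proof.
move=> w [x [y [edge [lxy seg]]]].
have [c [c1 c2 empty]] := long_edge_empty_disk ell_gt0 edge lxy seg.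
have [k kN cell_sub] := grid_cell_in_disk c1 c2.
rewrite /void_cells -bigcup_mkord; exists k => //.
rewrite /grid_void /void_event /=.
suff -> : X w `&` grid_cell (k %/ grid_size) (k %% grid_size) = set0.
  exact: npts_set0.
apply/seteqP; split => // v [/empty + /cell_sub].
by rewrite /= leNgt => /negP.
Qed.

End Grid.

Section VoidCells.
Variables (R : realType) (d : measure_display) (Omega : measurableType d).
Variables (P : probability Omega R) (X : Omega -> set (R * R)) (rho ell : R).
Hypothesis PPP : unit_poisson_process P X.

Lemma grid_void_measurable k : measurable (grid_void rho ell X k).
Proof.
by apply: PPP.1; [exact: half_open_square_measurable | exact: half_open_square_bounded].
Qed.

Lemma void_cells_measurable : measurable (void_cells rho ell X).
Proof. by apply: bigsetU_measurable => k _; exact: grid_void_measurable. Qed.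

Lemma void_cells_prob : 0 < ell ->
  (P (void_cells rho ell X) <=
    ((grid_size rho ell * grid_size rho ell)%:R * expR (- cell_side ell ^+ 2))%:E)%E.
Proof.
move=> l0; have L0 : 0 < cell_side ell by rewrite divr_gt0.
apply: le_trans (@content_subadditive _ _ _ P _ _ _
  (fun k _ => grid_void_measurable k) void_cells_measurable (@subset_refl _ _)) _.
rewrite (eq_bigr (fun _ => (expR (- cell_side ell ^+ 2))%:E)); last first.
  move=> k _; apply: etrans (poisson_void_prob PPP _ _) _.
  - exact: half_open_square_measurable.
  - exact: half_open_square_bounded.
  by rewrite /grid_cell area_half_open_square.
by rewrite sumEFin sumr_const card_ord mulr_natl.
Qed.

End VoidCells.

Section Numerics.
Variable R : realType.

Lemma expR_ge_pow (n : nat) (x : R) : (0 < n)%N -> - n%:R <= x ->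
  (1 + x / n%:R) ^+ n <= expR x.
Proof.
move=> n0 xn; have n0R : (0 : R) < n%:R by rewrite ltr0n.
have -> : expR x = expR (x / n%:R) ^+ n.
  by rewrite -expRM_natl mulrC divfK // gt_eqF.
rewrite lerXn2r ?nnegrE ?expR_ge0 ?expR_ge1Dx //.
by rewrite -(ler_pM2r n0R) mul0r mulrDl mul1r divfK ?gt_eqF //; lra.
Qed.

Lemma sqrt32_ge : (28 / 5 : R) <= Num.sqrt 32.
Proof.
have := sqr_sqrtr (ler0n R 32); have := sqrtr_ge0 (32 : R).
by rewrite expr2; nra.
Qed.

Lemma small_ell_bound (rho ell : R) : 0 <= rho -> 0 < ell -> ell ^+ 2 <= 112 ->
  1 <= (Num.sqrt 32 * rho / ell + 8) ^+ 2 * expR (- (ell ^+ 2 / 32)).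
Proof.
move=> r0 l0 hl.
have K8 : 8 <= Num.sqrt 32 * rho / ell + 8.
  have : 0 <= Num.sqrt 32 * rho / ell by rewrite divr_ge0 ?mulr_ge0 ?sqrtr_ge0 // ltW.
  lra.
have E : (1 + - (7 / 2) / 16) ^+ 16 <= expR (- (ell ^+ 2 / 32)).
  apply: le_trans (@expR_ge_pow 16 (- (7 / 2)) erefl _) _; first lra.
  by rewrite ler_expR; lra.
set K := _ + 8 in K8 *; set e := expR _ in E *.
have K64 : 64 <= K ^+ 2 by nra.
have e64 : 1 / 64 <= e by lra.
nra.
Qed.
Lemma large_ell_bound (rho ell : R) (N : nat) : 0 <= rho -> 0 < ell ->
  112 < ell ^+ 2 -> N%:R <= 200 * rho / ell + 152 ->
  (N * N)%:R * expR (- (ell / 3) ^+ 2) <=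
    (Num.sqrt 32 * rho / ell + 8) ^+ 2 * expR (- (ell ^+ 2 / 32)).
Proof.
move=> r0 l0 hl hN.
set E := expR (23 * ell ^+ 2 / 576).
have E36 : 36 <= E.
  have h36 : (36 : R) <= (1 + 23 * 112 / 576 / 16) ^+ 16 by lra.
  apply: le_trans h36 (le_trans _ (@expR_ge_pow 16 _ erefl _)); last lra.
  by rewrite lerXn2r ?nnegrE; lra.
(* ell^2 / 9 = ell^2 / 32 + 2 * (23 * ell^2 / 576) *)
have -> : expR (- (ell / 3) ^+ 2) = expR (- (ell ^+ 2 / 32)) * (E^-1) ^+ 2.
  by rewrite /E -expRN -expRM_natl -expRD; congr expR; field.
set K := Num.sqrt 32 * rho / ell + 8.
have NK : N%:R / E <= K.
  rewrite ler_pdivrMr ?(lt_le_trans _ E36) //.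
  have q0 : 0 <= rho / ell by rewrite divr_ge0 // ltW.
  have s32 : 28 / 5 * (rho / ell) <= Num.sqrt 32 * (rho / ell).
    by apply: ler_wpM2r => //; exact: sqrt32_ge.
  have hK : K = Num.sqrt 32 * (rho / ell) + 8 by rewrite /K mulrA.
  rewrite -mulrA in hN; nra.
have NE0 : 0 <= N%:R / E by rewrite divr_ge0 // (le_trans _ E36).
have -> : (N * N)%:R * (expR (- (ell ^+ 2 / 32)) * E^-1 ^+ 2)
    = (N%:R / E) ^+ 2 * expR (- (ell ^+ 2 / 32)) by rewrite natrM; ring.
by rewrite ler_wpM2r ?expR_ge0 // lerXn2r ?nnegrE // (le_trans NE0).
Qed.

End Numerics.

Theorem lemma19 (R : realType) (d : measure_display) (Omega : measurableType d)
  (P : probability Omega R) (X : Omega -> set (R * R)) (rho ell : R) :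
  unit_poisson_process P X -> 0 < rho -> 0 < ell ->
  exists2 F : set Omega, measurable F &
    long_edge_event X rho ell `<=` F /\
    (P F <= (((Num.sqrt 32 * rho / ell + 8) ^+ 2) * expR (- (ell ^+ 2 / 32)))%:E)%E.
Proof.
move=> PPP r0 l0.
have [small|large] := lerP (ell ^+ 2) 112.
  exists setT => //; split => //.
  by rewrite probability_setT lee_fin; apply: small_ell_bound => //; exact: ltW.
exists (void_cells rho ell X); first exact: void_cells_measurable _ _ PPP.
split; first exact: long_edge_event_sub_void_cells.
apply: le_trans (void_cells_prob rho PPP l0) _.
rewrite lee_fin; apply: large_ell_bound => //; [exact: ltW | exact: grid_size_le].
Qed.
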